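(* Consider a fully connected layer $w^i=\phi_i(W_iw^{i-1}+b_i)$ with $W_i\in\mathbb{R}^{n_i\times n_{i-1}}$, $b_i\in\mathbb{R}^{n_i}$ and $\phi_i(\nu)=(\varphi(\nu_1),\dots,\varphi(\nu_{n_i}))^\top$, where $\varphi:\mathbb{R}\to\mathbb{R}$ is slope-restricted on $[0,1]$. Let $Q_i\in\mathbb{S}^{n_i}$, $S_i\in\mathbb{R}^{n_i\times n_{i-1}}$, $R_i\in\mathbb{S}^{n_{i-1}}$. If there exists a positive definite diagonal $\Lambda_i\in\mathbb{R}^{n_i\times n_i}$ such that $$\begin{bmatrix}R_i & S_i^\top-W_i^\top\Lambda_i\\ S_i-\Lambda_iW_i & 2\Lambda_i+Q_i\end{bmatrix}\succeq 0,$$ then for all $w^{i-1}_a,w^{i-1}_b\in\mathbb{R}^{n_{i-1}}$, with $\Delta w^{i}=w^i_a-w^i_b$ and $\Delta w^{i-1}=w^{i-1}_a-w^{i-1}_b$, $${\Delta w^i}^\top Q_i\Delta w^i+2{\Delta w^i}^\top S_i\Delta w^{i-1}+{\Delta w^{i-1}}^\top R_i\Delta w^{i-1}\ge 0.$$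
   Context: $\mathbb{S}^n$ denotes the real symmetric $n\times n$ matrices. A function $\varphi:\mathbb{R}\to\mathbb{R}$ is slope-restricted on $[0,1]$ if $0\le\frac{\varphi(s)-\varphi(t)}{s-t}\le 1$ for all $s\ne t$. *)

From mathcomp Require Import all_boot all_order all_algebra.
Set Implicit Arguments. Unset Strict Implicit. Unset Printing Implicit Defensive.
Import Order.TTheory GRing.Theory Num.Theory.
Local Open Scope ring_scope.

Definition slope_restricted01 (R : realFieldType) (f : R -> R) : Prop :=
  forall s t : R, s != t -> 0 <= (f s - f t) / (s - t) <= 1.

Definition sym_mx (R : ringType) (n : nat) (A : 'M[R]_n) : Prop := A^T = A.

Definition psd (R : realFieldType) (n : nat) (A : 'M[R]_n) : Prop :=
  sym_mx A /\ forall x : 'cV[R]_n, 0 <= (x^T *m A *m x) ord0 ord0.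

Definition pos_diag (R : realFieldType) (n : nat) (L : 'M[R]_n) : Prop :=
  is_diag_mx L /\ forall i : 'I_n, 0 < L i i.

Definition layer (R : ringType) (m n : nat) (f : R -> R)
  (W : 'M[R]_(n, m)) (b : 'cV[R]_n) (w : 'cV[R]_m) : 'cV[R]_n :=
  map_mx f (W *m w + b).

(* Write dw for the output increment and dv := W (wa - wb) for the increment of the
   pre-activation. Slope restriction on [0,1] puts every coordinate pair (dw_i, dv_i)
   in the sector 0 <= dw_i (dv_i - dw_i), so for positive diagonal L the form
   dw^T L (dv - dw) is nonnegative. Evaluating the positive semidefinite block
   matrix at (wa - wb, dw) gives exactly the target quadratic form minus twice
   this nonnegative quantity. *)

From mathcomp Require Import all_boot all_order all_algebra.
From mathcomp Require Import ring.
Import Order.TTheory GRing.Theory Num.Theory.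
Local Open Scope ring_scope.

Lemma slope_restricted01_sector (R : realFieldType) (f : R -> R) (x y : R) :
  slope_restricted01 f -> 0 <= (f x - f y) * ((x - y) - (f x - f y)).
Proof.
move=> hf; have [->|neq_xy] := eqVneq x y; first by rewrite subrr mul0r.
have /andP[q_ge0 q_le1] := hf _ _ neq_xy.
set q := (f x - f y) / (x - y) in q_ge0 q_le1.
have -> : f x - f y = q * (x - y) by rewrite divfK // subr_eq0.
have -> : q * (x - y) * ((x - y) - q * (x - y)) = q * (1 - q) * (x - y) ^+ 2 by ring.
by rewrite mulr_ge0 ?sqr_ge0 // mulr_ge0 // subr_ge0.
Qed.

Lemma trmx11 (R : nmodType) (A : 'M[R]_1) : A^T = A.
Proof. by rewrite [A]mx11_scalar tr_scalar_mx. Qed.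

Lemma diag_form_ge0 (R : realFieldType) (n : nat) (d : 'rV[R]_n) (u v : 'cV[R]_n) :
  (forall i, 0 <= d 0 i) -> (forall i, 0 <= u i 0 * v i 0) ->
  0 <= (u^T *m diag_mx d *m v) 0 0.
Proof.
move=> d_ge0 uv_ge0; rewrite mul_mx_diag mxE; apply: sumr_ge0 => i _.
by rewrite !mxE mulrAC mulr_ge0.
Qed.

Lemma map_mx_sector (R : realFieldType) (n : nat) (f : R -> R) (L : 'M[R]_n)
    (u v : 'cV[R]_n) :
  slope_restricted01 f -> pos_diag L ->
  0 <= ((map_mx f u - map_mx f v)^T *m L *m (u - v - (map_mx f u - map_mx f v))) 0 0.
Proof.
move=> hf [/diag_mxP[d L_d] d_gt0]; rewrite L_d; apply: diag_form_ge0 => i.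
  by have := d_gt0 i; rewrite L_d mxE eqxx mulr1n => /ltW.
by rewrite !mxE slope_restricted01_sector.
Qed.

Lemma quad_form_block_sectorE (R : comRingType) (m n : nat) (Rm : 'M[R]_m)
    (S W : 'M[R]_(n, m)) (L Q : 'M[R]_n) (x : 'cV[R]_m) (y : 'cV[R]_n) :
  L^T = L ->
  y^T *m Q *m y + 2%:R *: (y^T *m S *m x) + x^T *m Rm *m x =
  (col_mx x y)^T *m block_mx Rm (S^T - W^T *m L) (S - L *m W) (2%:R *: L + Q)
    *m col_mx x y + 2%:R *: (y^T *m L *m (W *m x - y)).
Proof.
move=> sym_L.
have cross_S : x^T *m S^T *m y = y^T *m S *m x.
  by rewrite -[LHS]trmx11 !trmx_mul !trmxK mulmxA.
have cross_LW : x^T *m W^T *m L *m y = y^T *m L *m W *m x.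
  by rewrite -[LHS]trmx11 !trmx_mul !trmxK sym_L !mulmxA.
rewrite tr_col_mx mul_row_block mul_row_col.
rewrite !(mulmxDl, mulmxDr, mulmxN, mulNmx) !mulmxA -scalemxAr -scalemxAl.
rewrite cross_S cross_LW.
(* Abstracting the 1x1 products keeps [mxE] from unfolding them into sums. *)
move: (y^T *m Q *m y) (y^T *m S *m x) (x^T *m Rm *m x) (y^T *m L *m W *m x) (y^T *m L *m y).
by move=> a1 a2 a3 a4 a5; apply/matrixP => i j; rewrite !mxE; ring.
Qed.

Theorem lemma6 (R : realFieldType) (nprev ni : nat) (varphi : R -> R)
  (W : 'M[R]_(ni, nprev)) (b : 'cV[R]_ni)
  (Q : 'M[R]_ni) (S : 'M[R]_(ni, nprev)) (Rm : 'M[R]_nprev) :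
  slope_restricted01 varphi ->
  sym_mx Q -> sym_mx Rm ->
  (exists L : 'M[R]_ni, pos_diag L /\
     psd (block_mx Rm (S^T - W^T *m L) (S - L *m W) (2%:R *: L + Q))) ->
  forall wa wb : 'cV[R]_nprev,
    let dwp := wa - wb in
    let dw := layer varphi W b wa - layer varphi W b wb in
    0 <= (dw^T *m Q *m dw + 2%:R *: (dw^T *m S *m dwp) + dwp^T *m Rm *m dwp) ord0 ord0.
Proof.
move=> hf _ _ [L [L_pos [_ block_psd]]] wa wb; cbv zeta.
have sym_L : L^T = L.
  by case: L_pos => /diag_mxP[d ->] _; rewrite tr_diag_mx.
have pre_activation_increment : W *m (wa - wb) = (W *m wa + b) - (W *m wb + b).
  by rewrite mulmxBr opprD addrACA subrr addr0.
rewrite (@quad_form_block_sectorE _ _ _ Rm S W L Q _ _ sym_L) mxE.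
rewrite addr_ge0 ?block_psd // mxE mulr_ge0 ?ler0n // pre_activation_increment.
exact: map_mx_sector.
Qed.
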